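(* Let $g\in\mathbf{Sp}(2n,\mathbb Z)$ and $m\ge1$. (1) If $g\in\Gamma(m)$ then $\tau(g)g^{-1}\in\Gamma(2m)$. (2) If $g\in\Gamma(2m)$ then $\tau(g)g\in\Gamma(4m)$. (3) If $\tau(g)g^{-1}\in\Gamma(4m)$ then $g=\beta u$ for some $\beta\in\Gamma_{2m}(2)$ and some $u\in\mathbf{GL}(n,\mathbb Z)$.
   Context: $\mathbf{Sp}(2n,\mathbb Z)$: integral matrices $g=\begin{pmatrix}A&B\\C&D\end{pmatrix}$ with ${}^tgJg=J$, $J=\begin{pmatrix}0&I\\-I&0\end{pmatrix}$. $\tau\begin{pmatrix}A&B\\C&D\end{pmatrix}=\begin{pmatrix}A&-B\\-C&D\end{pmatrix}$. $\Gamma(N)=\{\gamma\in\mathbf{Sp}(2n,\mathbb Z):\gamma\equiv I\bmod N\}$ (so $\Gamma(1)=\mathbf{Sp}(2n,\mathbb Z)$). $\Gamma_{2m}(2)=\{\begin{pmatrix}A&B\\C&D\end{pmatrix}\in\mathbf{Sp}(2n,\mathbb Z):A,D\equiv I\bmod2,\ B,C\equiv0\bmod2m\}$. $\mathbf{GL}(n,\mathbb Z)$ is embedded in $\mathbf{Sp}(2n,\mathbb Z)$ via $U\mapsto\mathrm{diag}(U,{}^tU^{-1})$. *)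

From mathcomp Require Import all_boot all_order all_algebra.
Set Implicit Arguments. Unset Strict Implicit. Unset Printing Implicit Defensive.
Import Order.TTheory GRing.Theory Num.Theory.
Local Open Scope ring_scope.

Definition Jmx (n : nat) : 'M[int]_(n + n) := block_mx 0 1%:M (- 1%:M) 0.

Definition symplectic (n : nat) (g : 'M[int]_(n + n)) : Prop :=
  g^T *m Jmx n *m g = Jmx n.

Definition tau (n : nat) (g : 'M[int]_(n + n)) : 'M[int]_(n + n) :=
  block_mx (ulsubmx g) (- ursubmx g) (- dlsubmx g) (drsubmx g).

Definition mx_congr (p q : nat) (N : int) (A B : 'M[int]_(p, q)) : Prop :=
  forall i j, (A i j = B i j %[mod N])%Z.

Definition Gamma (n : nat) (N : int) (g : 'M[int]_(n + n)) : Prop :=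
  symplectic g /\ mx_congr N g 1%:M.

Definition Gamma2 (n : nat) (m : nat) (g : 'M[int]_(n + n)) : Prop :=
  [/\ symplectic g,
      mx_congr 2 (ulsubmx g) 1%:M, mx_congr 2 (drsubmx g) 1%:M,
      mx_congr (2 * m)%:Z (ursubmx g) 0 & mx_congr (2 * m)%:Z (dlsubmx g) 0].

Definition GLemb (n : nat) (U : 'M[int]_n) : 'M[int]_(n + n) :=
  block_mx U 0 0 (invmx U)^T.

(* Writing [tau g = S g S] with [S = diag(1, -1)] shows that [tau] preserves
   [Sp(2n, Z)] and that [tau g - g] is [-2] times the off-diagonal blocks
   [B, C] of [g]; expanding [g = 1 + m X] then gives (1) and (2).  For (3),
   [tau g = g mod 4m] forces [B = C = 0 mod 2m], so the symplectic relation
   [A^T D - C^T B = 1] makes [A] invertible mod 2.  By the Smith normal form,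
   [A = L diag(d) R] with [L, R] unimodular; the diagonal factor is then
   invertible over [F_2], hence the identity, so [A = U mod 2] with
   [U := L R] in [GL(n, Z)], and [beta := g diag(U^-1, U^T)] lies in
   [Gamma_2m(2)]. *)

From mathcomp Require Import all_boot all_order all_algebra ring.
Import GRing.Theory.
Set Implicit Arguments. Unset Strict Implicit.
Local Open Scope ring_scope.

Local Notation mod2 A := (map_mx (intr : int -> 'F_2) A).

Implicit Types (N M : int).

Lemma mx_congrP r c N (A B : 'M[int]_(r, c)) :
  mx_congr N A B <-> exists X, A = B + N *: X.
Proof.
split=> [congrAB | [X ->] i j]; last by rewrite !mxE addrC mulrC modzMDl.
exists (\matrix_(i, j) ((A i j - B i j) %/ N)%Z); apply/matrixP => i j.
have /eqP := congrAB i j; rewrite eqz_mod_dvd => /divzK.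
by rewrite !mxE mulrC => ->; rewrite addrC subrK.
Qed.

Lemma mx_congr_dvd r c N M (A B : 'M[int]_(r, c)) :
  (N %| M)%Z -> mx_congr M A B -> mx_congr N A B.
Proof.
move=> dvdNM congrAB i j; apply/eqP; rewrite eqz_mod_dvd.
by apply: dvdz_trans dvdNM _; rewrite -eqz_mod_dvd; apply/eqP.
Qed.

Lemma mx_congr_mulmxr r c p N (A B : 'M[int]_(r, c)) (C : 'M[int]_(c, p)) :
  mx_congr N A B -> mx_congr N (A *m C) (B *m C).
Proof.
case/mx_congrP=> X ->; apply/mx_congrP; exists (X *m C).
by rewrite mulmxDl scalemxAl.
Qed.

Lemma mx_congr_ursubmx m1 m2 n1 n2 N (A B : 'M[int]_(m1 + m2, n1 + n2)) :
  mx_congr N A B -> mx_congr N (ursubmx A) (ursubmx B).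
Proof. by move=> congrAB i j; rewrite !mxE. Qed.

Lemma mx_congr_dlsubmx m1 m2 n1 n2 N (A B : 'M[int]_(m1 + m2, n1 + n2)) :
  mx_congr N A B -> mx_congr N (dlsubmx A) (dlsubmx B).
Proof. by move=> congrAB i j; rewrite !mxE. Qed.

Lemma mx_congr_mulmxV r c N (A B : 'M[int]_(r, c)) (g : 'M[int]_c) :
  g \in unitmx -> mx_congr N (A *m invmx g) B <-> mx_congr N A (B *m g).
Proof.
move=> ug; split=> [/(mx_congr_mulmxr g) | /(mx_congr_mulmxr (invmx g))].
  by rewrite mulmxKV.
by rewrite mulmxK.
Qed.

Lemma mx_congr_F2P r c (A B : 'M[int]_(r, c)) : mx_congr 2 A B <-> mod2 A = mod2 B.
Proof.
have char2 : (2 \in [pchar 'F_2])%N by apply: pchar_Fp.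
split=> [congrAB | /matrixP eqAB i j]; first apply/matrixP => i j.
  by apply/eqP; rewrite !mxE -subr_eq0 -intrB -(dvdz_pcharf char2) -eqz_mod_dvd congrAB.
apply/eqP; rewrite eqz_mod_dvd (dvdz_pcharf char2) intrB subr_eq0.
by move: (eqAB i j); rewrite !mxE => ->.
Qed.

Section Symplectic.

Variable n : nat.
Implicit Types g h X : 'M[int]_(n + n).

Definition pm_mx : 'M[int]_(n + n) := block_mx 1%:M 0 0 (- 1%:M).

Lemma pm_mxK : pm_mx *m pm_mx = 1%:M.
Proof.
rewrite mulmx_block !mulmx0 !mul0mx !mulmx1 !addr0 !add0r mulNmx mulmxN opprK.
by rewrite mulmx1 -scalar_mx_block.
Qed.

Lemma tr_pm_mx : pm_mx^T = pm_mx.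
Proof. by rewrite tr_block_mx !trmx0 linearN /= trmx1. Qed.

Lemma pm_mx_Jmx : pm_mx *m Jmx n *m pm_mx = - Jmx n.
Proof.
rewrite !mulmx_block !mulmx0 !mul0mx !addr0 !add0r !mul0mx mulNmx mulmxN.
by rewrite !mulmx1 !mul1mx opprK opp_block_mx !oppr0 opprK.
Qed.

Lemma Jmx_sqr : Jmx n *m Jmx n = - 1%:M.
Proof.
rewrite mulmx_block !mulmx0 !mul0mx !addr0 !add0r mul1mx mulmx1.
by rewrite [in RHS]scalar_mx_block opp_block_mx oppr0.
Qed.

Lemma tauE g : tau g = pm_mx *m g *m pm_mx.
Proof.
rewrite /tau -[g in RHS]submxK !mulmx_block !mulmx0 !mul0mx !mulmx1 !mul1mx.
by rewrite !mulmxN !mulNmx !addr0 !add0r !mulmx1 opprK !mul1mx.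
Qed.

Lemma tau1 : tau (1%:M : 'M[int]_(n + n)) = 1%:M.
Proof. by rewrite tauE mulmx1 pm_mxK. Qed.

Lemma tauD g h : tau (g + h) = tau g + tau h.
Proof. by rewrite !tauE mulmxDr mulmxDl. Qed.

Lemma tauZ (a : int) g : tau (a *: g) = a *: tau g.
Proof. by rewrite !tauE -scalemxAr -scalemxAl. Qed.

Lemma tau_subE X : tau X - X = 2 *: block_mx 0 (- ursubmx X) (- dlsubmx X) 0.
Proof.
rewrite /tau -[X in _ - X]submxK opp_block_mx add_block_mx scale_block_mx.
by rewrite !scaler0 !subrr -!mulr2n -!scaler_nat.
Qed.

Lemma tau_addE X : tau X + X = 2 *: block_mx (ulsubmx X) 0 0 (drsubmx X).
Proof.
rewrite /tau -[X in _ + X]submxK add_block_mx scale_block_mx.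
by rewrite !scaler0 !addNr -!mulr2n -!scaler_nat.
Qed.

Lemma symplectic_unit g : symplectic g -> g \in unitmx.
Proof.
move=> sg; suff /mulmx1_unit[] : - (Jmx n *m g^T *m Jmx n) *m g = 1%:M by [].
by rewrite mulNmx -!mulmxA (mulmxA g^T) sg Jmx_sqr opprK.
Qed.

Lemma symplecticM g h : symplectic g -> symplectic h -> symplectic (g *m h).
Proof.
rewrite /symplectic trmx_mul => sg sh.
by rewrite -!mulmxA (mulmxA g^T) (mulmxA (g^T *m _)) sg mulmxA.
Qed.

Lemma symplecticV g : symplectic g -> symplectic (invmx g).
Proof.
move=> sg; have ug := symplectic_unit sg.
have trVK : (invmx g)^T *m g^T = 1%:M by rewrite -trmx_mul mulmxV // trmx1.
by rewrite /symplectic -[Jmx n in LHS]sg !mulmxA trVK mul1mx -mulmxA mulmxV ?mulmx1.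
Qed.

Lemma symplectic_tau g : symplectic g -> symplectic (tau g).
Proof.
rewrite /symplectic tauE !trmx_mul tr_pm_mx => sg.
have -> : pm_mx *m (g^T *m pm_mx) *m Jmx n *m (pm_mx *m g *m pm_mx) =
          pm_mx *m (g^T *m (pm_mx *m Jmx n *m pm_mx) *m g) *m pm_mx.
  by rewrite !mulmxA.
by rewrite pm_mx_Jmx mulmxN mulNmx sg mulmxN mulNmx pm_mx_Jmx opprK.
Qed.

Lemma symplectic_blocks g : symplectic g ->
  (ulsubmx g)^T *m drsubmx g - (dlsubmx g)^T *m ursubmx g = 1%:M.
Proof.
rewrite /symplectic -{1 2}[g]submxK /Jmx tr_block_mx !mulmx_block.
rewrite !mulmx0 !addr0 !add0r => /eq_block_mx[_ <- _ _].
by rewrite !mulmxN !mulNmx !mulmx1 addrC.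
Qed.

Lemma symplectic_GLemb (U : 'M[int]_n) : U \in unitmx -> symplectic (GLemb U).
Proof.
move=> uU; rewrite /symplectic /GLemb /Jmx tr_block_mx !trmx0 trmxK !mulmx_block.
rewrite !mulmx0 !mul0mx !addr0 !add0r !mul0mx !mulmx1 mulmxN mulNmx.
by rewrite -trmx_mul !mulVmx // trmx1 mulmx1 mulVmx.
Qed.

Lemma mulmx_GLemb g (U : 'M[int]_n) : g *m GLemb U =
  block_mx (ulsubmx g *m U) (ursubmx g *m (invmx U)^T)
           (dlsubmx g *m U) (drsubmx g *m (invmx U)^T).
Proof. by rewrite -{1}[g]submxK mulmx_block !mulmx0 !addr0 !add0r. Qed.

Lemma mulVmx_GLemb (U : 'M[int]_n) : U \in unitmx -> GLemb (invmx U) *m GLemb U = 1%:M.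
Proof.
move=> uU; rewrite mulmx_GLemb block_mxKul block_mxKur block_mxKdl block_mxKdr.
by rewrite mulVmx // invmxK -trmx_mul mulVmx // trmx1 !mul0mx -scalar_mx_block.
Qed.

Lemma tau_congrP N g : mx_congr (2 * N) (tau g) g <->
  mx_congr N (ursubmx g) 0 /\ mx_congr N (dlsubmx g) 0.
Proof.
split=> [|[/mx_congrP[Y eqB] /mx_congrP[Z eqC]]]; last first.
  apply/mx_congrP; exists (block_mx 0 (- Y) (- Z) 0).
  rewrite -[tau g](subrK g) tau_subE eqB eqC addrC !add0r -scalerA.
  by rewrite !scale_block_mx !scaler0 !scalerN.
case/mx_congrP=> X eq_tau; have := tau_subE g.
rewrite eq_tau addrAC subrr add0r -scalerA => /scalemx_inj-/(_ isT).
rewrite -[X]submxK scale_block_mx => /eq_block_mx[_ eqB eqC _]; split; apply/mx_congrP.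
  by exists (- ursubmx X); rewrite add0r scalerN eqB opprK.
by exists (- dlsubmx X); rewrite add0r scalerN eqC opprK.
Qed.

End Symplectic.

Lemma unitmx_diag_F2 k (d : 'rV['F_2]_k) : diag_mx d \in unitmx -> diag_mx d = 1%:M.
Proof.
rewrite unitmxE det_diag unitfE => /prodf_neq0 nz_d.
have d1 i : d 0 i = 1.
  by move: (nz_d i isT); case: (d 0 i) => [[|[|k']] //= lt_k _]; apply/val_inj.
by apply/matrixP=> i j; rewrite !mxE d1.
Qed.

Lemma unimodular_lift_F2 k (A : 'M[int]_k) :
  mod2 A \in unitmx -> exists2 U, U \in unitmx & mod2 U = mod2 A.
Proof.
move=> uA; case: (int_Smith_normal_form A) => L uL [R uR [d _ defA]].
set D := \matrix_(i, j) _ in defA.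
have mod2D : mod2 D = diag_mx (\row_i (d`_i)%:~R).
  by apply/matrixP=> i j; rewrite !mxE rmorphMn.
exists (L *m R); first by rewrite unitmx_mul uL uR.
move: uA; rewrite defA !map_mxM !unitmx_mul mod2D => /andP[/andP[_ /unitmx_diag_F2 ->] _].
by rewrite mulmx1.
Qed.

Lemma Gamma_tau_mulmxV n N (g : 'M[int]_(n + n)) :
  Gamma N g -> Gamma (2 * N) (tau g *m invmx g).
Proof.
case=> sg congr_g; split.
  by apply: symplecticM; [apply: symplectic_tau | apply: symplecticV].
apply/(mx_congr_mulmxV _ _ _ (symplectic_unit sg)); rewrite mul1mx; apply/tau_congrP.
split; [rewrite -(block_mxKur 1%:M 0 0 1%:M) | rewrite -(block_mxKdl 1%:M 0 0 1%:M)].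
  by rewrite -scalar_mx_block; apply: mx_congr_ursubmx.
by rewrite -scalar_mx_block; apply: mx_congr_dlsubmx.
Qed.

Lemma Gamma_tau_mulmx n N (g : 'M[int]_(n + n)) :
  Gamma (2 * N) g -> Gamma (4 * N) (tau g *m g).
Proof.
case=> sg /mx_congrP[X defg]; split; first by apply: symplecticM; [apply: symplectic_tau |].
apply/mx_congrP; exists (block_mx (ulsubmx X) 0 0 (drsubmx X) + N *: (tau X *m X)).
rewrite defg tauD tauZ tau1 mulmxDl mul1mx mulmxDr mulmx1 -scalemxAl -scalemxAr scalerA.
rewrite -!addrA; congr (_ + _).
rewrite addrA -scalerDr (addrC X) tau_addE scalerA scalerDr scalerA.
by congr (_ *: _ + _ *: _); ring.
Qed.

Lemma symplectic_blocks_F2 n (g : 'M[int]_(n + n)) :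
  symplectic g -> mx_congr 2 (ursubmx g) 0 ->
  (mod2 (ulsubmx g))^T *m mod2 (drsubmx g) = 1%:M.
Proof.
move=> /symplectic_blocks/(congr1 (fun A => mod2 A)) + /mx_congr_F2P modB.
by rewrite map_mxB !map_mxM -!map_trmx map_mx1 modB map_mx0 mulmx0 subr0.
Qed.

Lemma Gamma2_mulmx_GLembV n m (g : 'M[int]_(n + n)) (U : 'M[int]_n) :
  symplectic g -> U \in unitmx ->
  mx_congr (2 * m)%:Z (ursubmx g) 0 -> mx_congr (2 * m)%:Z (dlsubmx g) 0 ->
  mod2 U = mod2 (ulsubmx g) -> (mod2 (ulsubmx g))^T *m mod2 (drsubmx g) = 1%:M ->
  Gamma2 m (g *m GLemb (invmx U)).
Proof.
move=> sg uU congrB congrC modUA AD1.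
split; first by apply: symplecticM => //; apply: symplectic_GLemb; rewrite unitmx_inv.
all: rewrite mulmx_GLemb invmxK ?block_mxKul ?block_mxKur ?block_mxKdl ?block_mxKdr.
- by apply/mx_congr_F2P; rewrite map_mxM -modUA -map_mxM mulmxV ?map_mx1.
- by apply/mx_congr_F2P; rewrite map_mxM -map_trmx modUA map_mx1 (mulmx1C AD1).
- by rewrite -(mul0mx _ U^T); apply: mx_congr_mulmxr.
by rewrite -(mul0mx _ (invmx U)); apply: mx_congr_mulmxr.
Qed.

Lemma Gamma2_GLemb_factorization n m (g : 'M[int]_(n + n)) :
  symplectic g -> Gamma (4 * m)%:Z (tau g *m invmx g) ->
  exists (beta : 'M[int]_(n + n)) (U : 'M[int]_n),
    [/\ Gamma2 m beta, U \in unitmx & g = beta *m GLemb U].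
Proof.
move=> sg [_ congr_tau]; have ug := symplectic_unit sg.
have /tau_congrP[congrB congrC] : mx_congr (2 * (2 * m)%:Z) (tau g) g.
  by move/(mx_congr_mulmxV _ _ _ ug): congr_tau; rewrite mul1mx -PoszM mulnA.
have even2m : (2 %| (2 * m)%:Z)%Z by rewrite PoszM dvdz_mulr.
have AD1 := symplectic_blocks_F2 sg (mx_congr_dvd even2m congrB).
have [U uU modUA] : exists2 U, U \in unitmx & mod2 U = mod2 (ulsubmx g).
  by apply: unimodular_lift_F2; case/mulmx1_unit: AD1; rewrite unitmx_tr.
exists (g *m GLemb (invmx U)), U; split=> //; first exact: Gamma2_mulmx_GLembV.
by rewrite -mulmxA mulVmx_GLemb // mulmx1.
Qed.

Unset Implicit Arguments.

Theorem lemma4p5 (n : nat) (g : 'M[int]_(n + n)) (m : nat) :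
  symplectic g -> (0 < m)%N ->
  [/\ (Gamma m%:Z g -> Gamma (2 * m)%:Z (tau g *m invmx g)),
      (Gamma (2 * m)%:Z g -> Gamma (4 * m)%:Z (tau g *m g)) &
      (Gamma (4 * m)%:Z (tau g *m invmx g) ->
         exists (beta : 'M[int]_(n + n)) (U : 'M[int]_n),
           [/\ Gamma2 m beta, U \in unitmx & g = beta *m GLemb U])].
Proof.
move=> sg _; split; rewrite ?PoszM.
- exact: Gamma_tau_mulmxV.
- exact: Gamma_tau_mulmx.
exact: Gamma2_GLemb_factorization.
Qed.
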